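(* Let $(Y_t,X_t)_{t\ge1}$ be a hidden Markov model with finite state space $S$, $T\ge1$, and let $k$ satisfy $T\ge k>1$. Then for all paths $s^T\in S^T$, $$\bar R_k(s^T)=\bar R_\infty(s^T)+\bar R_{k-1}(s^T),$$ and for every $x^T\in\mathcal X^T$ (with $p(x^T)>0$) and all $s^T\in S^T$, $$\bar R_k(s^T|x^T)=\bar R_\infty(s^T|x^T)+\bar R_{k-1}(s^T|x^T).$$
   Context: Hidden Markov model: $Y$ is a Markov chain on finite $S$; given $Y$, the $X_t$ are conditionally independent and $X_t$ has density $f_s$ when $Y_t=s$. Prior path law $p(s^T)=\mathbf P(Y^T=s^T)$, posterior path law $p(s^T|x^T)=\mathbf P(Y^T=s^T|X^T=x^T)$; for $1\le a\le b\le T$, $p(s_a^b)=\mathbf P(Y_a^b=s_a^b)$ and $p(s_a^b|x^T)=\mathbf P(Y_a^b=s_a^b|X^T=x^T)$, where $s_a^b=(s_a,\dots,s_b)$. For a positive integer $k$: $\bar R_k(s^T)=-\frac1T\ln\prod_{j=1-k}^{T-1}p(s_{(j+1)\vee1}^{(j+k)\wedge T})$ and $\bar R_k(s^T|x^T)=-\frac1T\ln\prod_{j=1-k}^{T-1}p(s_{(j+1)\vee1}^{(j+k)\wedge T}|x^T)$; also $\bar R_\infty(s^T)=-\frac1T\ln p(s^T)$ and $\bar R_\infty(s^T|x^T)=-\frac1T\ln p(s^T|x^T)$. Here $\vee=\max$, $\wedge=\min$, $\ln0=-\infty$. *)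

From HB Require Import structures.
From mathcomp Require Import all_boot all_order all_algebra.
From mathcomp Require Import all_classical all_reals all_analysis.
Set Implicit Arguments. Unset Strict Implicit. Unset Printing Implicit Defensive.
Import Order.TTheory GRing.Theory Num.Theory.
Local Open Scope ring_scope.

Section HMMdefs.
Variables (R : realType) (S : finType).

(* a path s^T = (s_1,...,s_T); s_t (1-based) is s (t-1) *)
Notation path T := {ffun 'I_T -> S}.

Definition prior (pi : S -> R) (P : S -> S -> R) (T : nat) (s : path T) : R :=
  \prod_(t < T) (if val t == 0%N then pi (s t) else P (s (ord_pred t)) (s t)).

Definition joint (X : Type) (pi : S -> R) (P : S -> S -> R) (f : S -> X -> R)
  (T : nat) (x : 'I_T -> X) (s : path T) : R :=
  prior pi P s * \prod_(t < T) f (s t) (x t).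

Definition px (X : Type) (pi : S -> R) (P : S -> S -> R) (f : S -> X -> R)
  (T : nat) (x : 'I_T -> X) : R :=
  \sum_(u : path T) joint pi P f x u.

Definition post (X : Type) (pi : S -> R) (P : S -> S -> R) (f : S -> X -> R)
  (T : nat) (x : 'I_T -> X) (s : path T) : R :=
  joint pi P f x s / px pi P f x.

(* marginal of a path law q on the window [a,b] (1-based indices):
   q(s_a^b) = sum of q(u^T) over paths u^T with u_a^b = s_a^b *)
Definition marg (T : nat) (q : path T -> R) (a b : nat) (s : path T) : R :=
  \sum_(u : path T | [forall t : 'I_T, ((a <= t.+1 <= b)%N) ==> (u t == s t)]) q u.

Definition eln (r : R) : \bar R := if r == 0 then -oo%E else (ln r)%:E.

(* bar R_k(s^T) = -(1/T) ln prod_{j=1-k}^{T-1} q(s_{(j+1) v 1}^{(j+k) ^ T});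
   reindexed by i = j + k, i = 1, ..., T+k-1, the window is
   [max (i+1-k) 1, min i T]. *)
Definition Rbar (T : nat) (q : path T -> R) (k : nat) (s : path T) : \bar R :=
  ((T%:R)^-1)%:E *
    (- (\sum_(1 <= i < T + k) eln (marg q (maxn (i.+1 - k) 1) (minn i T) s)))%E.

Definition Rbar_inf (T : nat) (q : path T -> R) (s : path T) : \bar R :=
  ((T%:R)^-1)%:E * (- eln (q s))%E.

End HMMdefs.

From HB Require Import structures.
From mathcomp Require Import all_boot all_order all_algebra.
From mathcomp Require Import all_classical all_reals all_analysis.
From mathcomp Require Import zify.
Set Implicit Arguments. Unset Strict Implicit. Unset Printing Implicit Defensive.
Import Order.TTheory GRing.Theory Num.Theory.
Local Open Scope ring_scope.

(** The prior and the posterior path laws both have the exchange property of Markov chains: two paths that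
    meet at time [j] may swap their futures after [j] without changing the
    product of their probabilities.  Summing over paths, the marginals on two
    overlapping windows satisfy [p(s_a^b) p(s_c^d) = p(s_a^d) p(s_c^b)] for
    [a <= c <= b <= d].  Applied to consecutive windows of length [k] this
    telescopes the product defining [R_k] into [p(s^T)] times the product
    defining [R_(k-1)]; taking [-(1/T) ln] gives the identity. *)

Section PathLaws.
Variables (R : realType) (S : finType) (T : nat).
Local Notation path := {ffun 'I_T -> S}.

Definition splice (j : 'I_T) (u v : path) : path :=
  [ffun t : 'I_T => if (t <= j)%N then u t else v t].

Lemma spliceK j u v : splice j (splice j u v) (splice j v u) = u.
Proof. by apply/ffunP => t; rewrite !ffunE; case: (t <= j)%N. Qed.

Definition markov_exchange (q : path -> R) := forall j (u v : path), u j = v j ->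
  q u * q v = q (splice j u v) * q (splice j v u).

Lemma val_ord_pred (t : 'I_T) : (t : nat) != 0%N -> (ord_pred t : nat) = t.-1.
Proof.
move=> t0 /=; have tT := ltn_ord t.
have -> : ((t + T).-1 = t.-1 + T)%N by lia.
by rewrite modnDr modn_small //; lia.
Qed.

Lemma splice_ord_pred j (u v : path) (t : 'I_T) : u j = v j -> (t : nat) != 0%N ->
  splice j u v (ord_pred t) = (if (t <= j)%N then u else v) (ord_pred t).
Proof.
move=> uvj t0; have pt := val_ord_pred t0.
rewrite ffunE; case: (leqP t j) => tj; first by rewrite ifT // pt; lia.
case: leqP => // ptj.
suff -> : ord_pred t = j by [].
by apply: ord_inj; move: ptj; rewrite pt; lia.
Qed.

(* [ord_pred 0] wraps around to [T - 1], hence the condition on [H 0]. *)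
Lemma chain_markov_exchange (c : R) (H : 'I_T -> S -> S -> R) (q : path -> R) :
  (forall t x x' y, val t = 0%N -> H t x y = H t x' y) ->
  (forall u, q u = c * \prod_(t < T) H t (u (ord_pred t)) (u t)) ->
  markov_exchange q.
Proof.
move=> H0 qE j u v uvj; rewrite !qE mulrACA [RHS]mulrACA -!big_split /=.
congr (_ * _); apply: eq_bigr => t _.
have factor (w w' : path) : w j = w' j ->
    H t (splice j w w' (ord_pred t)) (splice j w w' t)
    = H t ((if (t <= j)%N then w else w') (ord_pred t))
          ((if (t <= j)%N then w else w') t).
  move=> wwj; have [t0|t0] := eqVneq (t : nat) 0%N.
    by rewrite [splice _ _ _ t]ffunE; case: (t <= j)%N; apply: H0.
  by rewrite splice_ord_pred // [splice _ _ _ t]ffunE; case: (t <= j)%N.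
rewrite !factor //; case: (t <= j)%N => //; exact: mulrC.
Qed.

Definition agree_on (a b : nat) (s u : path) : bool :=
  [forall t : 'I_T, (a <= t.+1 <= b)%N ==> (u t == s t)].

Lemma agree_onP a b (s u : path) :
  reflect (forall t : 'I_T, (a <= t.+1 <= b)%N -> u t = s t) (agree_on a b s u).
Proof.
apply: (iffP forallP) => h t; first by move=> tab; apply/eqP/(implyP (h t)).
by apply/implyP => /h ->.
Qed.

Lemma agree_on_splice a b c d (s : path) (j : 'I_T) (u v : path) :
  (a <= c <= b)%N -> (b <= d)%N -> val j = b.-1 -> (0 < b)%N ->
  agree_on a d s (splice j u v) && agree_on c b s (splice j v u)
  = agree_on a b s u && agree_on c d s v.
Proof.
move=> /andP[ac cb] bd jb b0.
apply/andP/andP => -[/agree_onP h1 /agree_onP h2]; split; apply/agree_onP => t tw.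
- by move: (h1 t); rewrite ffunE ifT; [apply; lia | rewrite jb; lia].
- move: (h1 t) (h2 t); rewrite !ffunE.
  by case: (leqP t j) => tj; rewrite jb in tj; [move=> _ | move=> + _]; apply; lia.
- rewrite ffunE; case: (leqP t j) => tj; rewrite jb in tj; [apply: h1 | apply: h2]; lia.
- by rewrite ffunE ifT; [apply: h2; lia | rewrite jb; lia].
Qed.

(* Reindex the double sum by the involution [(u, v) |-> (splice j u v, splice j v u)]
   at the last time [j] of the overlap of the two windows. *)
Lemma marg_exchange (q : path -> R) a b c d s : markov_exchange q ->
  (a <= c <= b)%N -> (b <= d)%N -> (0 < b <= T)%N ->
  marg q a b s * marg q c d s = marg q a d s * marg q c b s.
Proof.
move=> hq acb bd /andP[b0 bT].
have jT : (b.-1 < T)%N by lia.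
pose j := Ordinal jT.
rewrite /marg !mulr_suml.
under eq_bigr do rewrite mulr_sumr.
under [RHS]eq_bigr do rewrite mulr_sumr.
rewrite !(pair_big (fun u : path => _) (fun u : path => _) (fun u v => q u * q v)) /=.
pose h (p : path * path) := (splice j p.1 p.2, splice j p.2 p.1).
have h_inj : injective h by apply: (can_inj (g := h)) => -[u v]; rewrite /h /= !spliceK.
rewrite [RHS](reindex_inj h_inj); apply: eq_big => -[u v] /=.
  by rewrite (@agree_on_splice a b c d s j).
move=> /andP[/agree_onP hu /agree_onP hv]; apply: hq.
by rewrite hu ?hv //=; move: acb => /andP[]; lia.
Qed.

Lemma marg1T (q : path -> R) s : marg q 1 T s = q s.
Proof.
rewrite /marg (big_pred1 s) // => u /=.
apply/forallP/eqP => [h|-> t]; last exact/implyP.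
by apply/ffunP => t; apply/eqP/(implyP (h t)); rewrite ltn_ord.
Qed.

(* [Rbar q k s] is [-(1/T) ln (windows_prod q k (T + k) s)]. *)
Definition windows_prod (q : path -> R) (k n : nat) (s : path) : R :=
  \prod_(1 <= i < n) marg q (maxn (i.+1 - k) 1) (minn i T) s.

Lemma windows_prod_step (q : path -> R) s k n : markov_exchange q ->
  (1 < k)%N -> (1 <= T)%N -> (n.+2 <= T + k)%N ->
  windows_prod q k n.+2 s = marg q 1 (minn n.+1 T) s * windows_prod q k.-1 n.+1 s.
Proof.
move=> hq k1 T1; elim: n => [|n IH] nTk.
  by rewrite /windows_prod big_nat1 big_geq // mulr1; congr marg; lia.
rewrite /windows_prod big_nat_recr //= -/(windows_prod q k n.+2 s) IH; last by lia.
rewrite [in RHS]big_nat_recr //= -/(windows_prod q k.-1 n.+1 s).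
have -> : maxn (n.+2 - k.-1) 1 = maxn (n.+3 - k) 1 by lia.
rewrite mulrAC marg_exchange //; first by rewrite -!mulrA [X in _ * X]mulrC.
all: try (apply/andP; split); lia.
Qed.

Lemma windows_prod_telescope (q : path -> R) s k : markov_exchange q ->
  (1 < k)%N -> (1 <= T)%N ->
  windows_prod q k (T + k) s = q s * windows_prod q k.-1 (T + k.-1) s.
Proof.
move=> hq k1 T1.
have -> : (T + k = (T + k - 2).+2)%N by lia.
have -> : (T + k.-1 = (T + k - 2).+1)%N by lia.
rewrite windows_prod_step //; last by lia.
by rewrite (_ : minn _ T = T) ?marg1T //; lia.
Qed.

End PathLaws.

Section ExtendedLog.
Variable R : realType.

Lemma eln_mul (a b : R) : 0 <= a -> 0 <= b -> eln (a * b) = (eln a + eln b)%E.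
Proof.
rewrite /eln => a0 b0.
have [->|an] := eqVneq a 0; first by rewrite mul0r eqxx.
have [->|bn] := eqVneq b 0; first by rewrite mulr0 eqxx addeC.
by rewrite mulf_eq0 (negbTE an) (negbTE bn) /= lnM // posrE lt_def ?an ?bn.
Qed.

Lemma eln_prod (I : Type) (r : seq I) (P : pred I) (F : I -> R) :
  (forall i, P i -> 0 <= F i) ->
  (\sum_(i <- r | P i) eln (F i))%E = eln (\prod_(i <- r | P i) F i).
Proof.
move=> F0; elim: r => [|x r IH]; first by rewrite !big_nil /eln oner_eq0 ln1.
rewrite !big_cons; case: ifP => // Px.
by rewrite IH eln_mul ?F0 //; apply: prodr_ge0.
Qed.

Lemma eln_neq_pinfty (a : R) : eln a != +oo%E.
Proof. by rewrite /eln; case: ifP. Qed.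

End ExtendedLog.

Lemma Rbar_recursion (R : realType) (S : finType) (T : nat)
    (q : {ffun 'I_T -> S} -> R) k s :
  markov_exchange q -> (forall u, 0 <= q u) -> (1 < k)%N -> (1 <= T)%N ->
  Rbar q k s = (Rbar_inf q s + Rbar q k.-1 s)%E.
Proof.
move=> hq q0 k1 T1.
have marg0 a b : 0 <= marg q a b s by apply: sumr_ge0.
rewrite /Rbar /Rbar_inf !eln_prod // -!/(windows_prod q _ _ s).
rewrite windows_prod_telescope // eln_mul //; last exact: prodr_ge0.
have xoo := negbTE (eln_neq_pinfty (q s)).
have yoo := negbTE (eln_neq_pinfty (windows_prod q k.-1 (T + k.-1) s)).
rewrite oppeD; last by rewrite /adde_def xoo yoo andbF.
by rewrite muleDr // /adde_def !eqe_oppLR /= xoo yoo !andbF.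
Qed.

Section HMMLaws.
Variables (R : realType) (S : finType) (X : Type) (T : nat).
Variables (pi : S -> R) (P : S -> S -> R) (f : S -> X -> R).
Hypotheses (pi0 : forall s, 0 <= pi s) (P0 : forall s s', 0 <= P s s').
Hypothesis f0 : forall s x, 0 <= f s x.

Lemma prior_ge0 (u : {ffun 'I_T -> S}) : 0 <= prior pi P u.
Proof. by apply: prodr_ge0 => t _; case: ifP. Qed.

Lemma prior_markov_exchange : markov_exchange (prior pi P (T:=T)).
Proof.
apply: (@chain_markov_exchange R S T 1 (fun t x y => if val t == 0%N then pi y else P x y)).
  by move=> t x x' y /= ->.
by move=> u; rewrite mul1r.
Qed.

Lemma post_ge0 (x : 'I_T -> X) u : 0 < px pi P f x -> 0 <= post pi P f x u.
Proof.
move=> px0; apply: divr_ge0 (ltW px0).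
by apply: mulr_ge0 (prior_ge0 u) _; apply: prodr_ge0.
Qed.

Lemma post_markov_exchange (x : 'I_T -> X) : markov_exchange (post pi P f x).
Proof.
apply: (@chain_markov_exchange R S T (px pi P f x)^-1
  (fun t a b => (if val t == 0%N then pi b else P a b) * f b (x t))).
  by move=> t a a' b /= ->.
by move=> u; rewrite /post /joint /prior -big_split mulrC.
Qed.

End HMMLaws.

Theorem corollary5 (R : realType) (S : finType) (d : measure_display)
  (X : measurableType d) (mu : {measure set X -> \bar R})
  (pi : S -> R) (P : S -> S -> R) (f : S -> X -> R) (T k : nat) :
  (forall s, 0 <= pi s) -> \sum_(s : S) pi s = 1 ->
  (forall s s', 0 <= P s s') -> (forall s, \sum_(s' : S) P s s' = 1) ->
  (forall s, measurable_fun setT (f s)) -> (forall s x, 0 <= f s x) ->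
  (forall s, (\int[mu]_x (f s x)%:E = 1)%E) ->
  (1 <= T)%N -> (1 < k <= T)%N ->
  (forall s : {ffun 'I_T -> S},
      Rbar (prior pi P (T:=T)) k s
      = (Rbar_inf (prior pi P (T:=T)) s + Rbar (prior pi P (T:=T)) k.-1 s)%E)
  /\
  (forall x : 'I_T -> X, 0 < px pi P f x ->
    forall s : {ffun 'I_T -> S},
      Rbar (post pi P f x) k s
      = (Rbar_inf (post pi P f x) s + Rbar (post pi P f x) k.-1 s)%E).
Proof.
move=> pi0 _ P0 _ _ f0 _ T1 /andP[k1 _].
split=> [s | x px0 s]; apply: Rbar_recursion => //.
- exact: prior_markov_exchange.
- exact: prior_ge0.
- exact: post_markov_exchange.
- by move=> u; apply: post_ge0.
Qed.
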